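(* Suppose $f$ is globally Lipschitz continuous on $\mathbb{R}^{n\times p}$. Then for every $\beta>0$, the function $h$ is bounded below on $\mathbb{R}^{n\times p}$.
   Context: $f:\mathbb{R}^{n\times p}\to\mathbb{R}$ is differentiable with $f$ and $\nabla f$ locally Lipschitz. $\mathcal{A}(X):=\frac32I_p-\frac12X^\top X$, and $h(X):=f(X\mathcal{A}(X))+\frac{\beta}{4}\|X^\top X-I_p\|_F^2$. *)

From HB Require Import structures.
From mathcomp Require Import all_boot all_order all_algebra.
From mathcomp Require Import all_classical all_reals all_analysis.
Set Implicit Arguments. Unset Strict Implicit. Unset Printing Implicit Defensive.
Import Order.TTheory GRing.Theory Num.Theory.
Import numFieldNormedType.Exports.
Local Open Scope ring_scope.

Section Defs.
Variables (R : realType) (n p : nat).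

Definition frob2 (m k : nat) (A : 'M[R]_(m, k)) : R :=
  \sum_(i < m) \sum_(j < k) A i j ^+ 2.
Definition frob (m k : nat) (A : 'M[R]_(m, k)) : R := Num.sqrt (frob2 A).

Definition Amap (X : 'M[R]_(n, p)) : 'M[R]_p :=
  (3 / 2 : R)%:M - (1 / 2 : R) *: (X^T *m X).

Definition hfun (f : 'M[R]_(n, p) -> R) (beta : R) (X : 'M[R]_(n, p)) : R :=
  f (X *m Amap X) + beta / 4 * frob2 (X^T *m X - 1%:M).

Definition grad (f : 'M[R]_(n, p) -> R) (X : 'M[R]_(n, p)) : 'M[R]_(n, p) :=
  \matrix_(i < n, j < p) ('D_(delta_mx i j) f X).

Definition globally_lipschitz (m k : nat) (F : 'M[R]_(n, p) -> 'M[R]_(m, k)) :=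
  exists L : R, forall X Y, frob (F X - F Y) <= L * frob (X - Y).

Definition locally_lipschitz (m k : nat) (F : 'M[R]_(n, p) -> 'M[R]_(m, k)) :=
  forall X0 : 'M[R]_(n, p), exists r : R, exists L : R, 0 < r /\
    forall X Y, frob (X - X0) < r -> frob (Y - X0) < r ->
      frob (F X - F Y) <= L * frob (X - Y).

Definition scal_fun (f : 'M[R]_(n, p) -> R) : 'M[R]_(n, p) -> 'M[R]_(1, 1) :=
  fun X => (f X)%:M.

Definition bounded_below (g : 'M[R]_(n, p) -> R) :=
  exists m : R, forall X, m <= g X.

End Defs.

From HB Require Import structures.
From mathcomp Require Import all_boot all_order all_algebra.
From mathcomp Require Import all_classical all_reals all_analysis.
From mathcomp Require Import ring lra.
Import Order.TTheory GRing.Theory Num.Theory.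
Import numFieldNormedType.Exports.
Local Open Scope ring_scope.

(* With Y := X A(X) and T := X^T X - I, the identity A(X) = I - T/2 makes
   Y^T Y a polynomial in T:  Y^T Y = (I - T/2)(I + T)(I - T/2)
   = I - 3/4 T^2 + 1/4 T^3,  so  ||Y||^2 = p - 3/4 ||T||^2 + 1/4 tr T^3
   <= p + 1/4 ||T||^3.  Hence the Lipschitz term f(Y) >= f(0) - L ||Y||
   decreases at most like ||T||^(3/2), which the penalty beta/4 ||T||^2
   dominates. *)

Set Implicit Arguments. Unset Strict Implicit.

Section RealField.
Variable R : realFieldType.

Lemma ler_of_sqr (x y : R) : 0 <= y -> x ^+ 2 <= y ^+ 2 -> x <= y.
Proof.
move=> y_ge0; have [x_le0 _|x_gt0] := lerP x 0; first exact: le_trans y_ge0.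
by rewrite ler_sqr // nnegrE ltW.
Qed.

Lemma sum_mul_sqr_le (I : finType) (a b : I -> R) :
  (\sum_i a i * b i) ^+ 2 <= (\sum_i a i ^+ 2) * (\sum_i b i ^+ 2).
Proof.
(* Lagrange's identity: the defect is half a sum of squares. *)
have : 0 <= \sum_i \sum_j (a i * b j - a j * b i) ^+ 2.
  by apply: sumr_ge0 => i _; apply: sumr_ge0 => j _; exact: sqr_ge0.
have -> : \sum_i \sum_j (a i * b j - a j * b i) ^+ 2 =
    \sum_i \sum_j (a i ^+ 2 * b j ^+ 2 + a j ^+ 2 * b i ^+ 2
                   - 2 * (a i * b i * (a j * b j))).
  by apply: eq_bigr => i _; apply: eq_bigr => j _; ring.
under eq_bigr do rewrite sumrB big_split /=.
rewrite sumrB big_split /= [X in _ + X - _]exchange_big.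
under [X in _ - X]eq_bigr do rewrite -mulr_sumr.
rewrite -mulr_sumr -!big_distrlr /= -expr2.
lra.
Qed.

(* AM-GM, with |w| <= u^(3/2) the geometric mean of u^2 and u. *)
Lemma mul_le_sqr_add_of_sqr_le_cube (a c u w : R) :
  0 <= a -> 0 < c -> 0 <= u -> w ^+ 2 <= u ^+ 3 ->
  a * w <= c * u ^+ 2 + a ^+ 2 / (4 * c) * u.
Proof.
move=> a_ge0 c_gt0 u_ge0 wu.
set x := c * u ^+ 2; set y := a ^+ 2 / (4 * c) * u.
have x_ge0 : 0 <= x by apply: mulr_ge0; [lra | exact: sqr_ge0].
have y_ge0 : 0 <= y by apply: mulr_ge0 => //; apply: divr_ge0; [exact: sqr_ge0 | lra].
have xy : 4 * x * y = a ^+ 2 * u ^+ 3 by rewrite /x /y; field; lra.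
apply: ler_of_sqr; first exact: addr_ge0.
have aw : (a * w) ^+ 2 <= 4 * x * y.
  by rewrite xy exprMn; apply: ler_wpM2l => //; exact: sqr_ge0.
apply: le_trans aw _; rewrite -subr_ge0.
have -> : (x + y) ^+ 2 - 4 * x * y = (x - y) ^+ 2 by ring.
exact: sqr_ge0.
Qed.

Definition penalty_const (L b q : R) : R := L ^+ 4 / (2 * b ^+ 3) + L ^+ 2 * q + 1.

Lemma penalty_dominates (L b q s u w : R) :
  0 < b -> 0 <= q -> 0 <= s -> 0 <= u ->
  w ^+ 2 <= u ^+ 3 -> s ^+ 2 <= q + w / 4 ->
  L * s <= b / 4 * u + penalty_const L b q.
Proof.
move=> b_gt0 q_ge0 s_ge0 u_ge0 wu sq.
set K := penalty_const L b q.
have L2_ge0 : 0 <= L ^+ 2 by exact: sqr_ge0.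
have L4_ge0 : 0 <= L ^+ 4 by rewrite (exprM _ 2 2); exact: sqr_ge0.
have b3_gt0 : 0 < b ^+ 3 by exact: exprn_gt0.
have K0_ge0 : 0 <= L ^+ 4 / (2 * b ^+ 3) by apply: divr_ge0; lra.
have Lq_ge0 : 0 <= L ^+ 2 * q by exact: mulr_ge0.
have K_ge1 : 1 <= K by rewrite /K /penalty_const; lra.
have cube : L ^+ 2 / 4 * w <= b ^+ 2 / 16 * u ^+ 2 + L ^+ 4 / (4 * b ^+ 2) * u.
  have -> : L ^+ 4 / (4 * b ^+ 2) = (L ^+ 2 / 4) ^+ 2 / (4 * (b ^+ 2 / 16)).
    by field; lra.
  apply: mul_le_sqr_add_of_sqr_le_cube => //; first lra.
  by apply: divr_gt0; [exact: exprn_gt0 | lra].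
have lin : L ^+ 4 / (4 * b ^+ 2) * u <= b * K / 2 * u.
  apply: ler_wpM2r => //.
  have -> : L ^+ 4 / (4 * b ^+ 2) = b * (L ^+ 4 / (2 * b ^+ 3)) / 2 by field; lra.
  by apply: ler_wpM2r; [lra | apply: ler_wpM2l; rewrite /K /penalty_const; lra].
have const : L ^+ 2 * q <= K ^+ 2.
  have K_ge : L ^+ 2 * q + 1 <= K by rewrite /K /penalty_const; lra.
  rewrite expr2; move: Lq_ge0 K_ge; set t := L ^+ 2 * q => *; nra.
have [Ls_le0|Ls_gt0] := lerP (L * s) 0; first by nra.
apply: ler_of_sqr; first by nra.
have : L ^+ 2 * s ^+ 2 <= L ^+ 2 * (q + w / 4) by exact: ler_wpM2l.
rewrite exprMn sqrrD; nra.
Qed.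

Lemma cubic_mx_identity p (T : 'M[R]_p) :
  (1%:M - (1/2 : R) *: T) *m (T + 1%:M) *m (1%:M - (1/2 : R) *: T)
  = 1%:M - (3/4 : R) *: (T *m T) + (1/4 : R) *: (T *m T *m T).
Proof.
do ?rewrite ?mulmxBl ?mulmxDl ?mulmxBr ?mulmxDr ?mul1mx ?mulmx1.
do ?rewrite -?scalemxAl -?scalemxAr ?scalerA ?mulmxA.
move: (T *m T *m T) (T *m T) => T3 T2.
apply/matrixP => i j; rewrite !mxE.
move: (\sum_(j0 < p) _) => s; lra.
Qed.

End RealField.

Lemma mxtrace_trmx_mul (R : pzSemiRingType) m k (P Q : 'M[R]_(m, k)) :
  \tr (P^T *m Q) = \sum_(i < m) \sum_(j < k) P i j * Q i j.
Proof.
rewrite /mxtrace exchange_big; apply: eq_bigr => j _.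
by rewrite mxE; apply: eq_bigr => i _; rewrite mxE.
Qed.

Section Frobenius.
Variable R : realType.

Lemma frob2_ge0 m k (A : 'M[R]_(m, k)) : 0 <= frob2 A.
Proof. by apply: sumr_ge0 => i _; apply: sumr_ge0 => j _; exact: sqr_ge0. Qed.

Lemma frob2_mxtrace m k (A : 'M[R]_(m, k)) : frob2 A = \tr (A^T *m A).
Proof.
rewrite mxtrace_trmx_mul; apply: eq_bigr => i _.
by apply: eq_bigr => j _; rewrite expr2.
Qed.

Lemma mxtrace_trmx_mul_sqr_le m k (P Q : 'M[R]_(m, k)) :
  \tr (P^T *m Q) ^+ 2 <= frob2 P * frob2 Q.
Proof.
rewrite mxtrace_trmx_mul /frob2 !pair_big /=.
exact: (sum_mul_sqr_le (fun x : 'I_m * 'I_k => P x.1 x.2) (fun x => Q x.1 x.2)).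
Qed.

Lemma frob2_mulmx_le m k l (P : 'M[R]_(m, k)) (Q : 'M[R]_(k, l)) :
  frob2 (P *m Q) <= frob2 P * frob2 Q.
Proof.
rewrite /frob2 big_distrl /=; apply: ler_sum => i _.
rewrite (exchange_big _ _ _ _ _ (fun j l0 => Q j l0 ^+ 2)) big_distrr /=.
apply: ler_sum => l0 _; rewrite mxE.
exact: (sum_mul_sqr_le (fun j => P i j) (fun j => Q j l0)).
Qed.

Lemma mxtrace_cube_sqr_le m (T : 'M[R]_m) :
  T^T = T -> \tr (T *m T *m T) ^+ 2 <= frob2 T ^+ 3.
Proof.
move=> symT; rewrite mxtrace_mulC -{1}symT.
apply: le_trans (mxtrace_trmx_mul_sqr_le T (T *m T)) _.
rewrite exprS expr2; apply: ler_wpM2l; [exact: frob2_ge0 | exact: frob2_mulmx_le].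
Qed.

End Frobenius.

Section Amap.
Variables (R : realType) (n p : nat).

Lemma AmapE (X : 'M[R]_(n, p)) :
  Amap X = 1%:M - (1/2 : R) *: (X^T *m X - 1%:M).
Proof.
apply/matrixP => i j; rewrite !mxE.
by case: (i == j); rewrite ?mulr1n ?mulr0n; lra.
Qed.

Lemma trmx_gram_sub1 (X : 'M[R]_(n, p)) :
  (X^T *m X - 1%:M)^T = X^T *m X - 1%:M.
Proof. by rewrite linearB /= trmx_mul trmxK trmx1. Qed.

Lemma trmx_Amap (X : 'M[R]_(n, p)) : (Amap X)^T = Amap X.
Proof. by rewrite /Amap linearB /= linearZ /= tr_scalar_mx trmx_mul trmxK. Qed.

Lemma gram_mulmx_Amap (X : 'M[R]_(n, p)) :
  let T := X^T *m X - 1%:M in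
  (X *m Amap X)^T *m (X *m Amap X)
  = 1%:M - (3/4 : R) *: (T *m T) + (1/4 : R) *: (T *m T *m T).
Proof.
move=> T; rewrite trmx_mul trmx_Amap mulmxA -(mulmxA (Amap X)).
have -> : X^T *m X = T + 1%:M by rewrite /T subrK.
by rewrite AmapE -/T cubic_mx_identity.
Qed.

Lemma frob2_mulmx_Amap (X : 'M[R]_(n, p)) :
  let T := X^T *m X - 1%:M in
  frob2 (X *m Amap X) = p%:R - 3/4 * frob2 T + 1/4 * \tr (T *m T *m T).
Proof.
move=> T; rewrite frob2_mxtrace gram_mulmx_Amap -/T [frob2 T]frob2_mxtrace.
rewrite trmx_gram_sub1 -/T.
by clearbody T; rewrite !linearD !linearN !linearZ /= mxtrace1.
Qed.

End Amap.

Lemma lipschitz_lower_bound (R : realType) (n p : nat) (f : 'M[R]_(n, p) -> R)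
    (L : R) :
  (forall X Y, frob (scal_fun f X - scal_fun f Y) <= L * frob (X - Y)) ->
  forall X, f 0 - L * frob X <= f X.
Proof.
move=> lipf X; have := lipf X 0.
have -> : frob (scal_fun f X - scal_fun f 0) = `|f X - f 0|.
  by rewrite /frob /frob2 /scal_fun !big_ord1 !mxE /= !mulr1n sqrtr_sqr.
rewrite subr0 => fXL.
have := ler_norm (f 0 - f X); rewrite distrC; lra.
Qed.

Theorem mainTheorem6 (R : realType) (n p : nat) (f : 'M[R]_(n, p) -> R)
  (f_diff : forall X : 'M[R]_(n, p), differentiable f X)
  (f_loclip : locally_lipschitz (scal_fun f))
  (grad_loclip : locally_lipschitz (grad f))
  (f_lip : globally_lipschitz (scal_fun f)) :
  forall beta : R, 0 < beta -> bounded_below (hfun f beta).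
Proof.
move=> beta beta_gt0; case: f_lip => L lipf.
exists (f 0 - penalty_const L beta p%:R) => X; rewrite /hfun.
set Y := X *m Amap X; set T := X^T *m X - 1%:M.
have cube := mxtrace_cube_sqr_le (trmx_gram_sub1 X); rewrite -/T in cube.
have normY : frob Y ^+ 2 <= p%:R + \tr (T *m T *m T) / 4.
  rewrite /frob sqr_sqrtr ?frob2_ge0 // frob2_mulmx_Amap -/T.
  have := frob2_ge0 T; lra.
have := penalty_dominates L beta_gt0 (ler0n _ p) (sqrtr_ge0 _) (frob2_ge0 T) cube normY.
have := lipschitz_lower_bound lipf Y; rewrite /frob; lra.
Qed.
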